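(* Let $\{\theta_m\}$ satisfy $\theta_1\ge\theta_2\ge\cdots\ge0$, $\theta_m\to0$; $\mathcal B=\mathcal B(\{\theta_m\})$; $b_1,b_2>0$. There exists $C_2>0$, depending only on $b_1,b_2$ (besides $N$ and $\{\theta_m\}$), such that for all $m,q\in\mathbb N$ with $\theta_{m+1}\le1$ and every $g\in V$ satisfying (H): $\|\mathscr L_g\|_{\mathcal B\to\mathcal B}\le C_2$ and $\|\mathscr L_g^q-K^{(q)}_{g,m}\|_{\mathcal B\to\mathcal B}\le C_2^q\theta_{m+1}^q$.
   Context: $\Sigma_{\mathbf A}^+$ is the one-sided Markov shift of an $N\times N$ zero-one aperiodic matrix $\mathbf A$, $\sigma_{\mathbf A}$ the shift. $\mathrm{var}_k(\phi)=\sup\{|\phi(\omega)-\phi(\omega')|:\omega_j=\omega'_j,\ 0\le j\le k-1\}$; $V=\{\phi:\mathrm{var}_k(\phi)^{1/k}\to0\}$. $(\mathscr L_g\phi)(\omega)=\sum_{\sigma_{\mathbf A}\omega'=\omega}e^{g(\omega')}\phi(\omega')$. $\mathcal B(\{\theta_m\})=\{\phi\in V:\exists C\ge0,\ \mathrm{var}_k(\phi)\le C\theta_{k+1}^k\ \forall k\ge0\}$ with norm $\|\phi\|_\infty+\inf C$. Fix a Borel probability $\mu$ charging all nonempty open sets; $(E_m\phi)(\omega)=\mu([\omega|m])^{-1}\int_{[\omega|m]}\phi\,d\mu$, $[\omega|m]=\{\xi:\xi_j=\omega_j,0\le j\le m-1\}$. $K_{g,m}=\mathscr L_g\circ E_m$,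 $K^{(q)}_{g,m}=\mathscr L_g^q-(\mathscr L_g-K_{g,m})^q$. Condition (H) on $g\in V$: $e^{\max\mathrm{Re}\,g}\le b_1$ and $\mathrm{var}_k(g)\le b_2\theta_k^k$ for all $k\in\mathbb N$. *)

From HB Require Import structures.
From mathcomp Require Import all_boot all_order all_algebra.
From mathcomp Require Import all_classical all_reals all_analysis.
From mathcomp Require Import complex.
Set Implicit Arguments. Unset Strict Implicit. Unset Printing Implicit Defensive.
Import Order.TTheory GRing.Theory Num.Theory.
Import numFieldNormedType.Exports.
Local Open Scope classical_set_scope.
Local Open Scope ring_scope.

(* ambient space of one-sided sequences over the alphabet 'I_N, N = n.+1 *)
Definition shX (n : nat) := nat -> 'I_n.+1.
HB.instance Definition _ n := gen_eqMixin (shX n).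
HB.instance Definition _ n := gen_choiceMixin (shX n).
HB.instance Definition _ n := isPointed.Build (shX n) (fun _ => ord0).

Section Defs.
Variable n : nat.
Local Notation X := (shX n).

Definition cylX (w : X) (k : nat) : set X := [set xi | forall j, (j < k)%N -> xi j = w j].
Definition openX (U : set X) : Prop := forall w, U w -> exists k, cylX w k `<=` U.
Definition XB := g_sigma_algebraType openX.

Definition zero_one (A : 'M[nat]_n.+1) := forall i j, A i j = 0%N \/ A i j = 1%N.
Definition aperiodic (A : 'M[nat]_n.+1) := exists p : nat, forall i j, (0 < (A ^+ p) i j)%N.
Definition Sigma (A : 'M[nat]_n.+1) : set X := [set w | forall j, A (w j) (w j.+1) = 1%N].

Definition cyl (A : 'M[nat]_n.+1) (w : X) (m : nat) : set X := Sigma A `&` cylX w m.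

Definition relopen (A : 'M[nat]_n.+1) (U : set X) : Prop :=
  U `<=` Sigma A /\ forall w, U w -> exists k, cyl A w k `<=` U.

Definition scons (i : 'I_n.+1) (w : X) : X := fun j => if j is j'.+1 then w j' else i.

Variable R : realType.
Local Notation C := R[i].

Definition cabs (z : C) : R := Num.sqrt (complex.Re z ^+ 2 + complex.Im z ^+ 2).
Definition cexp (z : C) : C := Complex (expR (complex.Re z) * cos (complex.Im z)) (expR (complex.Re z) * sin (complex.Im z)).

Variable A : 'M[nat]_n.+1.

Definition var (phi : X -> C) (k : nat) : \bar R :=
  ereal_sup [set r | exists w w', [/\ Sigma A w, Sigma A w',
     (forall j, (j < k)%N -> w j = w' j) & r = (cabs (phi w - phi w'))%:E]].
Definition supn (phi : X -> C) : \bar R :=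
  ereal_sup [set r | exists w, Sigma A w /\ r = (cabs (phi w))%:E].

(* V = {phi : var_k(phi)^(1/k) -> 0}, i.e. for every e > 0, eventually var_k(phi) <= e^k *)
Definition inV (phi : X -> C) : Prop :=
  forall e : R, 0 < e -> \forall k \near \oo, (var phi k <= (e ^+ k)%:E)%E.

Variable theta : nat -> R.

Definition Bconst (phi : X -> C) : set R :=
  [set c | 0 <= c /\ forall k, (var phi k <= (c * theta k.+1 ^+ k)%:E)%E].
Definition inB (phi : X -> C) : Prop := inV phi /\ Bconst phi !=set0.
Definition Bnorm (phi : X -> C) : R := fine (supn phi) + inf (Bconst phi).

Definition opnorm_le (T : (X -> C) -> (X -> C)) (c : R) : Prop :=
  forall phi, inB phi -> inB (T phi) /\ Bnorm (T phi) <= c * Bnorm phi.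

(* transfer operator: sum over the preimages i w (A_{i w_0} = 1) of w *)
Definition Lop (g : X -> C) (phi : X -> C) : X -> C :=
  fun w => \sum_(i < n.+1 | A i (w 0%N) == 1%N) cexp (g (scons i w)) * phi (scons i w).

Variable mu : probability XB R.

Definition cint (D : set X) (f : X -> C) : C :=
  Complex (Rintegral mu D (fun x => complex.Re (f x))) (Rintegral mu D (fun x => complex.Im (f x))).

Definition Eop (m : nat) (phi : X -> C) : X -> C :=
  fun w => ((fine (mu (cyl A w m)))^-1)%:C%C * cint (cyl A w m) phi.

Definition Kop (g : X -> C) (m : nat) (phi : X -> C) : X -> C := Lop g (Eop m phi).

Definition opsub (T S : (X -> C) -> (X -> C)) : (X -> C) -> (X -> C) :=
  fun phi w => T phi w - S phi w.

Definition Kqop (g : X -> C) (m q : nat) : (X -> C) -> (X -> C) :=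
  opsub (iter q (Lop g)) (iter q (opsub (Lop g) (Kop g m))).

Definition condH (b1 b2 : R) (g : X -> C) : Prop :=
  [/\ inV g, (forall w, Sigma A w -> expR (complex.Re (g w)) <= b1)
    & forall k, (1 <= k)%N -> (var g k <= (b2 * theta k ^+ k)%:E)%E].

End Defs.

From HB Require Import structures.
From mathcomp Require Import all_boot all_order all_algebra.
From mathcomp Require Import all_classical all_reals all_analysis.
From mathcomp Require Import complex.
From mathcomp Require Import ring lra zify.
Set Implicit Arguments. Unset Strict Implicit. Unset Printing Implicit Defensive.
Import Order.TTheory GRing.Theory Num.Theory.
Import numFieldNormedType.Exports.
Local Open Scope classical_set_scope.
Local Open Scope ring_scope.

(* Instead of the norm ||phi|| = sup|phi| + inf C we work with explicit
   certificates [Bbound phi s c]: |phi| <= s on Sigma_A^+ and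
   var_k(phi) <= c theta_(k+1)^k for all k.  An operator T is bounded by K on B
   as soon as it maps every certificate (s, c) to one (s', c') with
   s' + c' <= K (s + c) ([opnorm_of_Bcontracts]), and this property is stable
   under iteration.  The core estimate [Lop_Bbound] bounds L_g psi from a sup
   bound s and a "shifted" variation bound d theta_(k+1)^k of psi on
   (k+1)-cylinders; it rests on |e^a - e^b| <= 4 b1 |a - b| and on condition (H).
   It applies to psi = phi (giving ||L_g|| <= C2) and to psi = phi - E_m phi,
   whose sup and shifted variation are O(theta_(m+1)) because E_m phi is the
   average of phi over m-cylinders ([Eop_close]); since
   L_g - K_(g,m) = L_g (1 - E_m) and L_g^q - K^(q)_(g,m) = (L_g - K_(g,m))^q,
   the second bound follows by iteration. *)

Section ComplexModulus.
Variable R : realType.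
Implicit Types (z a b u v : R[i]).

Lemma cabsE z : cabs z = `|(z : Rcomplex R)|.
Proof. by case: z. Qed.

Lemma cabs_ge0 z : 0 <= cabs z.
Proof. by rewrite cabsE. Qed.

Lemma cabs0 : cabs (0 : R[i]) = 0.
Proof. by rewrite cabsE normr0. Qed.

Lemma cabsD u v : cabs (u + v) <= cabs u + cabs v.
Proof. by rewrite !cabsE; exact: ler_normD. Qed.

Lemma cabsN z : cabs (- z) = cabs z.
Proof. by rewrite !cabsE normrN. Qed.

Lemma cabsM u v : cabs (u * v) = cabs u * cabs v.
Proof. by have := @Normc.normcM R u v; case: u; case: v. Qed.

Lemma cabs_ReIm z : cabs z <= `|complex.Re z| + `|complex.Im z|.
Proof.
rewrite /cabs -[X in _ <= X]ger0_norm ?addr_ge0 // -sqrtr_sqr.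
rewrite ler_sqrt ?sqr_ge0 // -[complex.Re z ^+ 2]real_normK ?num_real //.
rewrite -[complex.Im z ^+ 2]real_normK ?num_real //.
have := normr_ge0 (complex.Re z); have := normr_ge0 (complex.Im z).
set x := `|_|; set y := `|_|; nra.
Qed.

Lemma Re_le_cabs z : `|complex.Re z| <= cabs z.
Proof. by rewrite /cabs -sqrtr_sqr ler_sqrt ?addr_ge0 ?sqr_ge0 // lerDl sqr_ge0. Qed.

Lemma Im_le_cabs z : `|complex.Im z| <= cabs z.
Proof. by rewrite /cabs -sqrtr_sqr ler_sqrt ?addr_ge0 ?sqr_ge0 // lerDr sqr_ge0. Qed.

Lemma ReB u v : complex.Re (u - v) = complex.Re u - complex.Re v.
Proof. by case: u; case: v. Qed.

Lemma ImB u v : complex.Im (u - v) = complex.Im u - complex.Im v.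
Proof. by case: u; case: v. Qed.

Lemma ReMC (k : R) z : complex.Re ((k%:C)%C * z) = k * complex.Re z.
Proof. by case: z => x y /=; ring. Qed.

Lemma ImMC (k : R) z : complex.Im ((k%:C)%C * z) = k * complex.Im z.
Proof. by case: z => x y /=; ring. Qed.

Lemma cabs_cexp z : cabs (cexp z) = expR (complex.Re z).
Proof.
rewrite /cabs /cexp /= !exprMn -mulrDr cos2Dsin2 mulr1.
by rewrite sqrtr_sqr ger0_norm // expR_ge0.
Qed.

(* exp is b-Lipschitz on {x | e^x <= b}, by convexity: e^x - e^y <= e^x (x - y). *)
Lemma expR_lip (x y b : R) : expR x <= b -> expR y <= b ->
  `|expR x - expR y| <= b * `|x - y|.
Proof.
wlog yx : x y / y <= x.
  move=> H bx byy; have [/H|/ltW/H] := leP y x; first exact.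
  by move=> /(_ byy bx); rewrite distrC [`|y - x|]distrC.
move=> bx _.
have split_diff : expR x - expR y = expR x * (1 - expR (y - x)).
  by rewrite mulrBr mulr1 -expRD addrCA subrr addr0.
have convex := expR_ge1Dx (y - x).
have D0 : 0 <= expR x - expR y by rewrite subr_ge0 ler_expR.
rewrite ger0_norm // (ger0_norm (x := x - y)) ?subr_ge0 //.
have ex0 := expR_ge0 x.
move: split_diff convex D0 ex0 bx yx.
set D := expR x - expR y; set u := expR (y - x); set ex := expR x; nra.
Qed.

Lemma lipschitz1_of_deriv (f f' : R -> R) :
  (forall t : R, is_derive t (1 : R) f (f' t)) -> continuous f -> (forall t, `|f' t| <= 1) ->
  forall x y, `|f x - f y| <= `|x - y|.
Proof.
move=> df cf bf x y.
wlog yx : x y / y <= x.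
  move=> H; have [/H|/ltW/H] := leP y x; first exact.
  by rewrite distrC [`|y - x|]distrC.
have [c _ ->] := MVT_segment yx (fun t _ => df t) (continuous_subspaceT cf).
by rewrite normrM ler_piMl.
Qed.

Lemma sin_lip (x y : R) : `|sin x - sin y| <= `|x - y|.
Proof.
have sin_cont : continuous (@sin R) by exact: continuous_sin.
by have := @lipschitz1_of_deriv sin cos (@is_derive_sin R) sin_cont (@cos_max R); apply.
Qed.

Lemma cos_lip (x y : R) : `|cos x - cos y| <= `|x - y|.
Proof.
have cos_cont : continuous (@cos R) by exact: continuous_cos.
have sinN_max (t : R) : `|- sin t| <= 1 by rewrite normrN sin_max.
by have := @lipschitz1_of_deriv cos (fun t => - sin t) (@is_derive_cos R) cos_cont sinN_max; apply.
Qed.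

Lemma mul_diff_le (e1 e2 u1 u2 b : R) : 0 <= e2 <= b -> `|u1| <= 1 ->
  `|e1 * u1 - e2 * u2| <= `|e1 - e2| + b * `|u1 - u2|.
Proof.
move=> /andP[e20 e2b] u11.
have -> : e1 * u1 - e2 * u2 = (e1 - e2) * u1 + e2 * (u1 - u2) by ring.
apply: le_trans (ler_normD _ _) _; rewrite !normrM (ger0_norm e20).
apply: lerD; first by rewrite -[leRHS]mulr1 ler_wpM2l.
by apply: ler_wpM2r.
Qed.

Lemma cexp_lip a b (b1 : R) : expR (complex.Re a) <= b1 ->
  expR (complex.Re b) <= b1 -> cabs (cexp a - cexp b) <= 4 * b1 * cabs (a - b).
Proof.
move=> ha hb.
have hX := Re_le_cabs (a - b); have hY := Im_le_cabs (a - b).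
apply: le_trans (cabs_ReIm _) _.
move: a b ha hb hX hY => [x1 y1] [x2 y2] /= ha hb hX hY.
set C := cabs _ in hX hY *.
have b0 : 0 <= b1 := le_trans (expR_ge0 _) hb.
have e2 : 0 <= expR x2 <= b1 by rewrite expR_ge0 hb.
have hE : `|expR x1 - expR x2| <= b1 * C.
  by apply: le_trans (expR_lip ha hb) _; apply: ler_wpM2l.
have hc : b1 * `|cos y1 - cos y2| <= b1 * C.
  by apply: ler_wpM2l => //; apply: le_trans (cos_lip _ _) hY.
have hs : b1 * `|sin y1 - sin y2| <= b1 * C.
  by apply: ler_wpM2l => //; apply: le_trans (sin_lip _ _) hY.
have := mul_diff_le (expR x1) (cos y2) e2 (cos_max y1).
have := mul_diff_le (expR x1) (sin y2) e2 (sin_max y1).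
lra.
Qed.

End ComplexModulus.

Section AverageBounds.
Context d (T : measurableType d) (R : realType) (mu : {measure set T -> \bar R}).

(* Monotonicity of the nonnegative integral without measurability assumptions:
   the functions phi averaged by E_m are arbitrary, not necessarily measurable. *)
Lemma int_mono (D : set T) (h1 h2 : T -> \bar R) :
  (forall x, D x -> (0 <= h1 x)%E) -> (forall x, D x -> (0 <= h2 x)%E) ->
  (forall x, D x -> (h1 x <= h2 x)%E) ->
  (\int[mu]_(x in D) h1 x <= \int[mu]_(x in D) h2 x)%E.
Proof.
move=> p1 p2 h12; rewrite (ge0_integralE mu p1) (ge0_integralE mu p2) /=.
apply: ereal_sup_le => _ [k hk <-]; exists k => // x.
apply: le_trans (hk x) _; rewrite /patch; case: ifP => // /set_mem; exact: h12.
Qed.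

Lemma ge0_integral_sandwich (D : set T) (mD : measurable D) (r a b : R)
  (h : T -> \bar R) : mu D = r%:E -> 0 <= a -> 0 <= b ->
  (forall x, D x -> a%:E <= h x <= b%:E)%E ->
  ((a * r)%:E <= \int[mu]_(x in D) h x <= (b * r)%:E)%E.
Proof.
move=> hr a0 b0 hab.
have h0 x : D x -> (0 <= h x)%E.
  by move=> /hab /andP[+ _]; apply: le_trans; rewrite lee_fin.
rewrite !EFinM -hr -!(integral_cst mu mD); apply/andP; split.
- apply: int_mono => x Dx; [by rewrite lee_fin | exact: h0 | by case/andP: (hab x Dx)].
- apply: int_mono => x Dx; [exact: h0 | by rewrite lee_fin | by case/andP: (hab x Dx)].
Qed.

Lemma Rintegral_bounds (D : set T) (mD : measurable D) (r : R) (f : T -> R)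
  (lo hi : R) : mu D = r%:E -> (forall x, D x -> lo <= f x <= hi) ->
  lo * r <= Rintegral mu D f <= hi * r.
Proof.
move=> hr hf.
pose pos t : R := Num.max t 0.
have pos_ge0 t : 0 <= pos t by rewrite le_max lexx orbT.
have pos_le t u : t <= u -> pos t <= pos u.
  by move=> tu; rewrite ge_max !le_max tu lexx !orbT.
have pos_sub t : pos t - pos (- t) = t.
  rewrite /pos !maxEle oppr_le0.
  by case: (lerP t 0) => ht; case: (lerP 0 t) => h't; rewrite ?subr0 ?sub0r ?opprK //; lra.
set F := fun x => (f x)%:E.
have /andP[p1 p2] : ((pos lo * r)%:E <= \int[mu]_(x in D) F^\+ x <= (pos hi * r)%:E)%E.
  apply: ge0_integral_sandwich => // x Dx; rewrite funeposE -EFin_max !lee_fin.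
  by case/andP: (hf x Dx) => h1 h2; rewrite !pos_le.
have /andP[n1 n2] : ((pos (- hi) * r)%:E <= \int[mu]_(x in D) F^\- x
                     <= (pos (- lo) * r)%:E)%E.
  apply: ge0_integral_sandwich => // x Dx; rewrite funenegE -EFinN -EFin_max !lee_fin.
  by case/andP: (hf x Dx) => h1 h2; rewrite !pos_le // lerN2.
rewrite /Rintegral integralE.
move: p1 p2 n1 n2.
case: (\int[mu]_(x in D) F^\+ x)%E => [p| |]; case: (\int[mu]_(x in D) F^\- x)%E => [q| |] //=;
  rewrite ?leye_eq ?leeNy_eq ?lee_fin // => p1 p2 n1 n2.
rewrite -[X in X * r <= _](pos_sub lo) -[X in _ <= X * r](pos_sub hi) !mulrBl.
apply/andP; split; lra.
Qed.

Lemma average_close (D : set T) (mD : measurable D) (r : R) (f : T -> R) (y eps : R) :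
  mu D = r%:E -> 0 < r -> (forall x, D x -> `|f x - y| <= eps) ->
  `|y - r^-1 * Rintegral mu D f| <= eps.
Proof.
move=> hr r0 hf.
have hb x : D x -> y - eps <= f x <= y + eps by move=> Dx; rewrite -ler_distl hf.
have /andP[lo hi] := Rintegral_bounds mD hr hb.
by rewrite ler_distlC ler_pdivlMl // ler_pdivrMl // ![r * _]mulrC lo hi.
Qed.

End AverageBounds.

Section TransferOperator.
Variables (R : realType) (n : nat) (A : 'M[nat]_n.+1).
Local Notation X := (shX n).
Implicit Types (phi psi : X -> R[i]) (w u : X).

Definition agree w w' k := forall j, (j < k)%N -> w j = w' j.

Definition sup_le psi (s : R) := forall w, Sigma A w -> cabs (psi w) <= s.

Lemma Sigma_scons i w : A i (w 0%N) = 1%N -> Sigma A w -> Sigma A (scons i w).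
Proof. by move=> h1 hw [|j] //=. Qed.

Lemma agree_scons i w w' k : agree w w' k -> agree (scons i w) (scons i w') k.+1.
Proof. by move=> h [|j] //= jk; apply: h. Qed.

Lemma var_pt phi k (r : R) w w' : (var A phi k <= r%:E)%E ->
  Sigma A w -> Sigma A w' -> agree w w' k -> cabs (phi w - phi w') <= r.
Proof.
move=> hv hw hw' ag; rewrite -lee_fin; apply: le_trans hv.
by apply: ereal_sup_ubound; exists w, w'.
Qed.

Lemma var_le phi k (r : R) :
  (forall w w', Sigma A w -> Sigma A w' -> agree w w' k -> cabs (phi w - phi w') <= r) ->
  (var A phi k <= r%:E)%E.
Proof.
move=> h; apply: ge_ereal_sup => _ [w [w' [hw hw' ag ->]]].
by rewrite lee_fin; apply: h.
Qed.

Lemma cabs_diff_sup phi (s : R) w w' : sup_le phi s -> Sigma A w -> Sigma A w' ->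
  cabs (phi w - phi w') <= 2 * s.
Proof.
move=> hs hw hw'; apply: le_trans (cabsD _ _) _; rewrite cabsN mulr2n mulrDl mul1r.
by apply: lerD; apply: hs.
Qed.

Lemma cabs_sum (P : pred 'I_n.+1) (F : 'I_n.+1 -> R[i]) (B : R) : 0 <= B ->
  (forall i, P i -> cabs (F i) <= B) -> cabs (\sum_(i < n.+1 | P i) F i) <= n.+1%:R * B.
Proof.
move=> B0 hF; rewrite big_mkcond /=.
apply: (@le_trans _ _ (\sum_(i < n.+1) B)); last by rewrite sumr_const card_ord mulr_natl.
elim/big_rec2: _ => [|i y1 y2 _ h]; first by rewrite cabs0.
apply: le_trans (cabsD _ _) _; apply: lerD => //.
by case: ifP => [/hF //|_]; rewrite cabs0.
Qed.

Lemma term_bound (a b u v : R[i]) (b1 : R) : expR (complex.Re a) <= b1 ->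
  expR (complex.Re b) <= b1 ->
  cabs (cexp a * u - cexp b * v) <= b1 * cabs (u - v) + 4 * b1 * cabs (a - b) * cabs v.
Proof.
move=> ha hb.
have -> : cexp a * u - cexp b * v = cexp a * (u - v) + (cexp a - cexp b) * v by ring.
apply: le_trans (cabsD _ _) _; rewrite !cabsM cabs_cexp.
apply: lerD; first by apply: ler_wpM2r => //; exact: cabs_ge0.
by apply: ler_wpM2r; [exact: cabs_ge0 | exact: cexp_lip].
Qed.

Variables (g : X -> R[i]) (b1 : R).
Hypothesis b1_ge0 : 0 <= b1.
Hypothesis g_expb : forall w, Sigma A w -> expR (complex.Re (g w)) <= b1.

Lemma Lop_sup psi (s : R) : 0 <= s -> sup_le psi s ->
  sup_le (Lop A g psi) (n.+1%:R * (b1 * s)).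
Proof.
move=> s0 hs w hw; apply: cabs_sum; first exact: mulr_ge0.
move=> i /eqP hi; have hiw := Sigma_scons hi hw.
rewrite cabsM cabs_cexp.
by apply: ler_pM; [exact: expR_ge0 | exact: cabs_ge0 | exact: g_expb | exact: hs].
Qed.

(* Variation estimate on (k+1)-cylinders: the preimages i w, i w' lie in a
   common (k+2)-cylinder, where psi varies by at most del and g by at most G. *)
Lemma Lop_diff psi k w w' (del s G : R) :
  0 <= del -> 0 <= s -> 0 <= G -> Sigma A w -> Sigma A w' -> agree w w' k.+1 ->
  (forall i, A i (w 0%N) = 1%N -> cabs (psi (scons i w) - psi (scons i w')) <= del) ->
  sup_le psi s -> (var A g k.+2 <= G%:E)%E ->
  cabs (Lop A g psi w - Lop A g psi w') <= n.+1%:R * (b1 * del + 4 * b1 * G * s).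
Proof.
move=> d0 s0 G0 hw hw' ag hd hs hG.
have e0 : w' 0%N = w 0%N by rewrite ag.
rewrite /Lop e0 -sumrB; apply: cabs_sum; first by rewrite addr_ge0 ?mulr_ge0.
move=> i /eqP hi.
have hiw := Sigma_scons hi hw.
have hiw' : Sigma A (scons i w') by apply: Sigma_scons => //; rewrite e0.
apply: le_trans (term_bound _ _ (g_expb hiw) (g_expb hiw')) _.
apply: lerD; first by apply: ler_wpM2l => //; exact: hd.
apply: ler_pM; [by rewrite !mulr_ge0 ?cabs_ge0 | exact: cabs_ge0 | | exact: hs].
apply: ler_wpM2l; first by rewrite mulr_ge0.
exact: var_pt hG hiw hiw' (agree_scons _ ag).
Qed.

End TransferOperator.

Section BoundCertificates.
Variables (R : realType) (n : nat) (A : 'M[nat]_n.+1) (theta : nat -> R).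
Hypothesis theta_mono : forall m, (1 <= m)%N -> theta m.+1 <= theta m.
Hypothesis theta_ge0 : forall m, (1 <= m)%N -> 0 <= theta m.
Local Notation X := (shX n).
Implicit Types (phi psi : X -> R[i]) (T : (X -> R[i]) -> (X -> R[i])).

Lemma lerX_ge0 (x y : R) k : 0 <= x -> x <= y -> x ^+ k <= y ^+ k.
Proof. by move=> x0 xy; apply: lerXn2r; rewrite // nnegrE //; exact: le_trans xy. Qed.

Lemma theta_anti i j : (1 <= i)%N -> (i <= j)%N -> theta j <= theta i.
Proof.
move=> i1; elim: j => [|j IH]; first by rewrite leqn0 => /eqP ->.
rewrite leq_eqVlt => /orP[/eqP ->//|]; rewrite ltnS => ij.
apply: le_trans (IH ij); apply: theta_mono; exact: leq_trans i1 ij.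
Qed.

Lemma thetaX_ge0 k j : (1 <= k)%N -> 0 <= theta k ^+ j.
Proof. by move=> k1; apply: exprn_ge0; apply: theta_ge0. Qed.

Lemma thetaX_shift k j : (1 <= j <= k.+2)%N ->
  theta k.+2 ^+ k.+1 <= theta k.+1 ^+ k * theta j.
Proof.
case/andP=> j1 jk; rewrite exprSr.
apply: ler_pM; [exact: thetaX_ge0 | exact: theta_ge0 | | exact: theta_anti].
by apply: lerX_ge0; rewrite ?theta_ge0 ?theta_mono.
Qed.

Definition Bbound phi (s c : R) := [/\ 0 <= s, 0 <= c, sup_le A phi s &
  forall k w w', Sigma A w -> Sigma A w' -> agree w w' k ->
    cabs (phi w - phi w') <= c * theta k.+1 ^+ k].

Definition shift_var_le psi (d : R) := forall k u u', Sigma A u -> Sigma A u' ->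
  agree u u' k.+1 -> cabs (psi u - psi u') <= d * theta k.+1 ^+ k.

Definition Bcontracts T (K : R) := forall phi s c, Bbound phi s c ->
  exists s' c', Bbound (T phi) s' c' /\ s' + c' <= K * (s + c).

Lemma Bbound_shift_var phi s c : Bbound phi s c -> shift_var_le phi (c * theta 1).
Proof.
case=> _ c0 _ hv k u u' hu hu' ag; apply: le_trans (hv _ _ _ hu hu' ag) _.
by rewrite -mulrA ler_wpM2l // [theta 1 * _]mulrC thetaX_shift.
Qed.

Lemma Bbound_var phi s c k : Bbound phi s c -> (var A phi k <= (c * theta k.+1 ^+ k)%:E)%E.
Proof. by case=> _ _ _ hv; apply: var_le => w w' hw hw' ag; apply: hv. Qed.

Lemma Bbound_Bconst phi s c : Bbound phi s c -> Bconst A theta phi c.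
Proof. by move=> hb; have [_ c0 _ _] := hb; split => // k; exact: Bbound_var hb. Qed.

Lemma near_oo (P : nat -> Prop) :
  (\forall k \near \oo, P k) <-> exists N, forall k, (N <= k)%N -> P k.
Proof. by split => [[N _ h]|[N h]]; exists N. Qed.

(* Since theta_k -> 0, var_k(phi) <= c theta_(k+1)^k <= e^k for large k. *)
Lemma Bbound_inV phi s c : theta @ \oo --> 0 -> Bbound phi s c -> inV A phi.
Proof.
move=> theta_cvg hb e e0.
have e20 : 0 < e / 2 by rewrite divr_gt0.
have [N HN] := (near_oo _).1 (@cvgr_dist_le _ _ _ _ _ _ _ theta_cvg _ e20).
have [_ c0 _ _] := hb.
have hN1 := archi_boundP c0.
apply/near_oo; exists (maxn N (Num.Def.archi_bound c)) => k.
rewrite geq_max => /andP[kN kN1].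
apply: le_trans (Bbound_var k hb) _; rewrite lee_fin.
have /andP[ht0 ht1] : 0 <= theta k.+1 <= e / 2.
  rewrite theta_ge0 //=; have := HN k.+1 (leq_trans kN (leqnSn _)).
  by rewrite sub0r normrN => /(le_trans (ler_norm _)).
have c2k : c <= 2 ^+ k.
  apply: le_trans (ltW hN1) _; rewrite -natrX ler_nat.
  exact: leq_trans kN1 (ltnW (ltn_expl _ _)).
apply: (@le_trans _ _ (2 ^+ k * (e / 2) ^+ k)).
  by apply: ler_pM => //; [rewrite exprn_ge0 | exact: lerX_ge0].
by rewrite expr_div_n mulrCA divff ?mulr1 // expf_neq0.
Qed.

Lemma Bbound_inB phi s c : theta @ \oo --> 0 -> Bbound phi s c -> inB A theta phi.
Proof. by move=> hcvg hb; split; [exact: Bbound_inV hb | exists c; exact: Bbound_Bconst hb]. Qed.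

Lemma Bbound_Bnorm phi s c : Bbound phi s c -> Bnorm A theta phi <= s + c.
Proof.
move=> hb; have [s0 c0 hs _] := hb; apply: lerD.
  have : (supn A phi <= s%:E)%E.
    by apply: ge_ereal_sup => _ [w [hw ->]]; rewrite lee_fin; apply: hs.
  by case: (supn A phi) => [r| |] //=; rewrite lee_fin.
by apply: ge_inf; [exists 0 => x [] | exact: Bbound_Bconst hb].
Qed.

Lemma Bconst_Bbound phi c : Bconst A theta phi c -> Bbound phi (fine (supn A phi)) c.
Proof.
move=> [c0 hc].
have hv k w w' : Sigma A w -> Sigma A w' -> agree w w' k ->
    cabs (phi w - phi w') <= c * theta k.+1 ^+ k.
  by move=> hw hw' ag; apply: var_pt (hc k) hw hw' ag.
have [[w0 hw0]|nW] := pselect (exists w, Sigma A w); last first.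
  have -> : supn A phi = -oo%E.
    apply/eqP; rewrite eq_le leNye andbT.
    by apply: ge_ereal_sup => x [w [hw _]]; exfalso; apply: nW; exists w.
  by split => // w hw; exfalso; apply: nW; exists w.
have ub : (supn A phi <= (cabs (phi w0) + c)%:E)%E.
  apply: ge_ereal_sup => _ [w [hw ->]]; rewrite lee_fin.
  have := hv 0%N w w0 hw hw0 (fun j (h : (j < 0)%N) => False_ind _ (notF h)).
  rewrite expr0 mulr1 => h.
  rewrite -(subrK (phi w0) (phi w)); apply: le_trans (cabsD _ _) _.
  by rewrite addrC lerD2l.
have lb : ((cabs (phi w0))%:E <= supn A phi)%E by apply: ereal_sup_ubound; exists w0.
have fin : supn A phi \is a fin_num.
  by rewrite fin_numE; apply/andP; split; apply/negP => /eqP E; rewrite E in ub lb.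
split => //.
- by rewrite -lee_fin fineK //; apply: le_trans lb; rewrite lee_fin cabs_ge0.
- by move=> w hw; rewrite -lee_fin fineK //; apply: ereal_sup_ubound; exists w.
Qed.

Lemma opnorm_of_Bcontracts T (K : R) : theta @ \oo --> 0 -> 0 <= K ->
  Bcontracts T K -> opnorm_le A theta T K.
Proof.
move=> hcvg K0 hT phi [_ [c0 hc0]].
have Hc c : Bconst A theta phi c ->
    inB A theta (T phi) /\ Bnorm A theta (T phi) <= K * (fine (supn A phi) + c).
  move=> hc; have [s' [c' [hb hsc]]] := hT _ _ _ (Bconst_Bbound hc).
  by split; [exact: Bbound_inB hb | exact: le_trans (Bbound_Bnorm hb) hsc].
split; first exact: (Hc _ hc0).1.
have [K0'|Kp] := eqVneq K 0.
  by have := (Hc _ hc0).2; rewrite /Bnorm K0' !mul0r.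
have Kgt : 0 < K by rewrite lt_def Kp K0.
rewrite /Bnorm -ler_pdivrMl // -lerBlDl; apply: lb_le_inf; first by exists c0.
by move=> c hc; rewrite lerBlDl ler_pdivrMl //; exact: (Hc _ hc).2.
Qed.

Lemma Bcontracts_iter T (K : R) q : 0 <= K -> Bcontracts T K -> Bcontracts (iter q T) (K ^+ q).
Proof.
move=> K0 hT; elim: q => [|q IH] phi s c hb.
  by exists s, c; rewrite expr0 mul1r.
have [s1 [c1 [hb1 h1]]] := IH _ _ _ hb.
have [s2 [c2 [hb2 h2]]] := hT _ _ _ hb1.
exists s2, c2; split => //; apply: le_trans h2 _.
by rewrite exprS -mulrA ler_wpM2l.
Qed.

Variables (g : X -> R[i]) (b1 b2 : R).
Hypotheses (b1_ge0 : 0 <= b1) (b2_ge0 : 0 <= b2).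
Hypothesis g_expb : forall w, Sigma A w -> expR (complex.Re (g w)) <= b1.
Hypothesis g_var : forall k, (1 <= k)%N -> (var A g k <= (b2 * theta k ^+ k)%:E)%E.

Lemma Lop_Bbound psi s d : 0 <= s -> 0 <= d -> sup_le A psi s -> shift_var_le psi d ->
  Bbound (Lop A g psi) (n.+1%:R * (b1 * s))
    (n.+1%:R * b1 * (d + 4 * b2 * theta 1 * s + 2 * s)).
Proof.
move=> s0 d0 hs hd.
have t1 : 0 <= theta 1 by exact: theta_ge0.
have hLs := Lop_sup b1_ge0 g_expb s0 hs.
have c0 : 0 <= n.+1%:R * b1 * (d + 4 * b2 * theta 1 * s + 2 * s).
  by rewrite !mulr_ge0 // !addr_ge0 // !mulr_ge0.
split => //; first by rewrite !mulr_ge0.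
move=> [|k] w w' hw hw' ag.
  rewrite expr0 mulr1; apply: le_trans (cabs_diff_sup hLs hw hw') _.
  rewrite -subr_ge0; set t := _ - _.
  have -> : t = n.+1%:R * b1 * (d + 4 * b2 * theta 1 * s) by rewrite /t; ring.
  by rewrite !mulr_ge0 // !addr_ge0 // !mulr_ge0.
set t := theta k.+2 ^+ k.+1.
have t0 : 0 <= t by exact: thetaX_ge0.
have G : b2 * theta k.+2 ^+ k.+2 <= b2 * (theta 1 * t).
  apply: ler_wpM2l => //; rewrite exprSr mulrC.
  by apply: ler_wpM2r => //; apply: theta_anti.
have hdiff := Lop_diff (psi := psi) b1_ge0 g_expb (mulr_ge0 d0 t0) s0
  (mulr_ge0 b2_ge0 (thetaX_ge0 k.+2 (isT : (1 <= k.+2)%N))) hw hw' ag.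
apply: le_trans (hdiff _ hs (g_var (isT : (1 <= k.+2)%N))) _.
  move=> i hi; apply: hd; [exact: Sigma_scons | | exact: agree_scons].
  by apply: Sigma_scons => //; rewrite -(ag 0%N).
have -> : n.+1%:R * b1 * (d + 4 * b2 * theta 1 * s + 2 * s) * t =
  n.+1%:R * (b1 * (d * t) + 4 * b1 * (b2 * (theta 1 * t)) * s) + 2 * (n.+1%:R * b1 * s * t)
  by ring.
apply: ler_wpDr; first by rewrite !mulr_ge0.
apply: ler_wpM2l => //; apply: lerD => //.
by apply: ler_wpM2r => //; apply: ler_wpM2l => //; rewrite mulr_ge0.
Qed.

Definition transfer_const := n.+1%:R * b1 * (10 + theta 1 + 8 * b2 * theta 1).

Lemma transfer_const_ge0 : 0 <= transfer_const.
Proof.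
have t1 : 0 <= theta 1 by exact: theta_ge0.
by rewrite !mulr_ge0 // !addr_ge0 // !mulr_ge0.
Qed.

Lemma transfer_const_gt0 : 0 < b1 -> 0 < transfer_const.
Proof.
move=> b1_gt0; have t1 : 0 <= theta 1 by exact: theta_ge0.
by rewrite !mulr_gt0 // ltr_wpDr ?mulr_ge0 // ltr_wpDr.
Qed.

Lemma lin_le (a b K s c : R) : 0 <= s -> 0 <= c -> a <= K -> b <= K ->
  a * s + b * c <= K * (s + c).
Proof. by move=> s0 c0 aK bK; rewrite mulrDr lerD // ler_wpM2r. Qed.

Lemma Lop_Bcontracts : Bcontracts (Lop A g) transfer_const.
Proof.
move=> phi s c hb; have [s0 c0 _ _] := hb.
have t1 : 0 <= theta 1 by exact: theta_ge0.
eexists; eexists; split.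
  exact: Lop_Bbound s0 (mulr_ge0 c0 t1) (let: And4 _ _ hs _ := hb in hs)
    (Bbound_shift_var hb).
have -> : n.+1%:R * (b1 * s) + n.+1%:R * b1 * (c * theta 1 + 4 * b2 * theta 1 * s + 2 * s)
  = (n.+1%:R * b1 * (3 + 4 * b2 * theta 1)) * s + (n.+1%:R * b1 * theta 1) * c by ring.
have bt : 0 <= b2 * theta 1 by rewrite mulr_ge0.
by apply: lin_le => //; apply: ler_wpM2l; rewrite ?mulr_ge0 //; lra.
Qed.

End BoundCertificates.

Section CylinderAverages.
Variables (R : realType) (n : nat) (A : 'M[nat]_n.+1) (mu : probability (XB n) R).
Local Notation X := (shX n).
Implicit Types (phi : X -> R[i]) (w : X).

(* Cylinders of X are open, and Sigma_A^+ is closed: a forbidden transition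
   A_(x_j x_(j+1)) <> 1 is seen on the whole (j+2)-cylinder of x. *)
Lemma openX_cylX w k : openX (cylX w k).
Proof. by move=> x hx; exists k => y hy j jk; rewrite hy // hx. Qed.

Lemma openX_not_Sigma : openX (~` Sigma A).
Proof.
move=> x /= hx.
have [j hj] : exists j, A (x j) (x j.+1) <> 1%N.
  by apply: contrapT => H; apply: hx => j; apply: contrapT => h; apply: H; exists j.
by exists j.+2 => y hy hSy; apply: hj; rewrite -hy // -hy //; exact: hSy.
Qed.

Lemma measurable_cyl w m : measurable (cyl A w m : set (XB n)).
Proof.
apply: measurableI; last by apply: sub_sigma_algebra; exact: openX_cylX.
rewrite -(setCK (Sigma A)); apply: measurableC; apply: sub_sigma_algebra.
exact: openX_not_Sigma.
Qed.

Hypothesis mu_open_pos : forall U, relopen A U -> U !=set0 -> (0 < mu U)%E.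

(* Cylinders around points of Sigma_A^+ are nonempty relatively open sets, so
   they have positive measure and E_m is well defined on them. *)
Lemma cyl_pos w m : Sigma A w -> (0 < mu (cyl A w m))%E.
Proof.
move=> hw; apply: mu_open_pos; last by exists w; split.
split; first by move=> x [].
by move=> x [hx xw]; exists m => y [hy yx]; split => // j jm; rewrite yx // xw.
Qed.

Lemma Eop_close phi m w eps : Sigma A w ->
  (forall x, cyl A w m x -> cabs (phi x - phi w) <= eps) ->
  cabs (phi w - Eop A mu m phi w) <= 2 * eps.
Proof.
move=> hw he.
have mD := measurable_cyl w m.
have p0 := cyl_pos m hw.
have fin : mu (cyl A w m) \is a fin_num.
  rewrite ge0_fin_numE; last exact: ltW.
  by apply: le_lt_trans (probability_le1 _ mD) _; rewrite ltry.
have hr : mu (cyl A w m) = (fine (mu (cyl A w m)))%:E by rewrite fineK.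
have r0 : 0 < fine (mu (cyl A w m)) by rewrite -lte_fin -hr.
apply: le_trans (cabs_ReIm _) _; rewrite mulr2n mulrDl mul1r.
apply: lerD.
- rewrite ReB /Eop ReMC /cint /=; apply: (@average_close _ _ _ mu _ mD _ _ _ _ hr r0) => x Dx.
  by rewrite -ReB; apply: le_trans (Re_le_cabs _) (he x Dx).
- rewrite ImB /Eop ImMC /cint /=; apply: (@average_close _ _ _ mu _ mD _ _ _ _ hr r0) => x Dx.
  by rewrite -ImB; apply: le_trans (Im_le_cabs _) (he x Dx).
Qed.

Lemma Eop_agree phi m w w' : agree w w' m -> Eop A mu m phi w = Eop A mu m phi w'.
Proof.
move=> ag; rewrite /Eop.
suff -> : cyl A w m = cyl A w' m by [].
rewrite /cyl /cylX; congr (_ `&` _).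
by apply/seteqP; split => x /= h j jm; rewrite h // ag.
Qed.

Lemma LK_eq g m phi :
  opsub (Lop A g) (Kop A mu g m) phi = Lop A g (fun x => phi x - Eop A mu m phi x).
Proof.
apply/funext => w; rewrite /opsub /Kop /Lop -sumrB; apply: eq_bigr => i _.
by rewrite mulrBr.
Qed.

Lemma Kqop_eq g m q :
  opsub (iter q (Lop A g)) (Kqop A mu g m q) = iter q (opsub (Lop A g) (Kop A mu g m)).
Proof.
by apply/funext => phi; apply/funext => w; rewrite /opsub /Kqop opprB addrC subrK.
Qed.

Variable theta : nat -> R.
Hypothesis theta_mono : forall m, (1 <= m)%N -> theta m.+1 <= theta m.
Hypothesis theta_ge0 : forall m, (1 <= m)%N -> 0 <= theta m.
Variable m : nat.
Hypothesis theta_le1 : theta m.+1 <= 1.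
Local Notation th := (theta m.+1).

Lemma th_ge0 : 0 <= th. Proof. exact: theta_ge0. Qed.

Lemma thX_le j : (1 <= j)%N -> th ^+ j <= th.
Proof.
case: j => // j _; rewrite exprS -[leRHS]mulr1.
by apply: ler_wpM2l; [exact: th_ge0 | exact: exprn_ile1 th_ge0 theta_le1].
Qed.

(* The residual phi - E_m phi of a B-bounded phi is O(theta_(m+1)^m) ... *)
Lemma Eresidual_sup phi s c : Bbound A theta phi s c ->
  sup_le A (fun x => phi x - Eop A mu m phi x) (2 * (c * th ^+ m)).
Proof.
move=> [_ _ _ hv] x hx; apply: (Eop_close hx) => y [hy yx].
exact: hv m y x hy hx yx.
Qed.

(* ... and its variation on (k+1)-cylinders is O(theta_(k+1)^k theta_(m+1)):
   for k+1 >= m the averages cancel, otherwise the sup bound suffices. *)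
Lemma Eresidual_shift_var phi s c : Bbound A theta phi s c ->
  shift_var_le A theta (fun x => phi x - Eop A mu m phi x) (4 * c * th).
Proof.
move=> hb k u u' hu hu' ag; have [_ c0 _ hv] := hb.
have hP : 0 <= c * (theta k.+1 ^+ k * th) by rewrite !mulr_ge0 ?th_ge0 ?thetaX_ge0.
have -> : 4 * c * th * theta k.+1 ^+ k = 4 * (c * (theta k.+1 ^+ k * th)) by ring.
have [mk|km] := leqP m k.+1.
  rewrite (Eop_agree _ (w' := u')); last by move=> j jm; apply: ag; exact: leq_trans jm mk.
  rewrite opprB addrA subrK.
  apply: le_trans (hv _ _ _ hu hu' ag) _.
  apply: le_trans (_ : _ <= c * (theta k.+1 ^+ k * th)) _; last lra.
  by rewrite ler_wpM2l // thetaX_shift // mk.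
apply: le_trans (cabs_diff_sup (Eresidual_sup hb) hu hu') _.
have hm : th ^+ m <= theta k.+1 ^+ k * th.
  have -> : th ^+ m = th ^+ k * th ^+ (m - k) by rewrite -exprD subnKC // ltnW // ltnW.
  apply: ler_pM; rewrite ?exprn_ge0 ?th_ge0 //.
    by apply: lerX_ge0; [exact: th_ge0 | apply: theta_anti => //; lia].
  by apply: thX_le; rewrite subn_gt0 ltnW.
have : c * th ^+ m <= c * (theta k.+1 ^+ k * th) by rewrite ler_wpM2l.
lra.
Qed.

End CylinderAverages.

Section ApproximationError.
Variables (R : realType) (n : nat) (A : 'M[nat]_n.+1) (mu : probability (XB n) R).
Variable theta : nat -> R.
Hypothesis theta_mono : forall m, (1 <= m)%N -> theta m.+1 <= theta m.
Hypothesis theta_ge0 : forall m, (1 <= m)%N -> 0 <= theta m.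
Hypothesis mu_open_pos : forall U, relopen A U -> U !=set0 -> (0 < mu U)%E.
Variables (g : shX n -> R[i]) (b1 b2 : R).
Hypotheses (b1_ge0 : 0 <= b1) (b2_ge0 : 0 <= b2).
Hypothesis g_expb : forall w, Sigma A w -> expR (complex.Re (g w)) <= b1.
Hypothesis g_var : forall k, (1 <= k)%N -> (var A g k <= (b2 * theta k ^+ k)%:E)%E.
Variable m : nat.
Hypotheses (m_ge1 : (1 <= m)%N) (theta_le1 : theta m.+1 <= 1).

Lemma LK_Bcontracts :
  Bcontracts A theta (opsub (Lop A g) (Kop A mu g m)) (transfer_const n theta b1 b2 * theta m.+1).
Proof.
move=> phi s c hb; have [s0 c0 _ _] := hb.
have th0 : 0 <= theta m.+1 by exact: theta_ge0.
have t1 : 0 <= theta 1 by exact: theta_ge0.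
have hsup : sup_le A (fun x => phi x - Eop A mu m phi x) (2 * c * theta m.+1).
  move=> x hx; apply: le_trans (Eresidual_sup mu_open_pos m hb hx) _.
  rewrite -mulrA; apply: ler_wpM2l => //; apply: ler_wpM2l => //.
  apply: (thX_le theta_ge0 theta_le1 m_ge1).
rewrite LK_eq; eexists; eexists; split.
  apply: (Lop_Bbound theta_mono theta_ge0 b1_ge0 b2_ge0 g_expb g_var _ _ hsup
    (Eresidual_shift_var mu_open_pos theta_mono theta_ge0 theta_le1 hb));
  by rewrite !mulr_ge0.
have -> : n.+1%:R * (b1 * (2 * c * theta m.+1)) + n.+1%:R * b1 *
    (4 * c * theta m.+1 + 4 * b2 * theta 1 * (2 * c * theta m.+1) + 2 * (2 * c * theta m.+1))
  = 0 * s + (n.+1%:R * b1 * (10 + 8 * b2 * theta 1) * theta m.+1) * c by ring.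
have bt : 0 <= b2 * theta 1 by rewrite mulr_ge0.
apply: lin_le => //; first by apply: mulr_ge0 => //; exact: transfer_const_ge0.
by rewrite /transfer_const ler_wpM2r // ler_wpM2l ?mulr_ge0 //; lra.
Qed.

End ApproximationError.

Unset Implicit Arguments.

Theorem lemma3p6 (R : realType) (n : nat) (theta : nat -> R) (b1 b2 : R) :
  (forall m, (1 <= m)%N -> theta m.+1 <= theta m) ->
  (forall m, (1 <= m)%N -> 0 <= theta m) ->
  theta @ \oo --> 0 ->
  0 < b1 -> 0 < b2 ->
  exists C2 : R, 0 < C2 /\
    forall (A : 'M[nat]_n.+1) (mu : probability (XB n) R),
      zero_one A -> aperiodic A ->
      (mu (Sigma A) = 1)%E ->
      (forall U, relopen A U -> U !=set0 -> (0 < mu U)%E) ->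
      forall (m q : nat), (1 <= m)%N -> (1 <= q)%N -> theta m.+1 <= 1 ->
      forall g : shX n -> R[i], condH A theta b1 b2 g ->
        opnorm_le A theta (Lop A g) C2 /\
        opnorm_le A theta (opsub (iter q (Lop A g)) (Kqop A mu g m q))
          (C2 ^+ q * theta m.+1 ^+ q).
Proof.
move=> theta_mono theta_ge0 theta_cvg b1_gt0 b2_gt0.
have [b1_ge0 b2_ge0] := (ltW b1_gt0, ltW b2_gt0).
exists (transfer_const n theta b1 b2).
split; first exact: transfer_const_gt0.
move=> A mu _ _ _ mu_open_pos m q m_ge1 _ theta_le1 g [_ g_expb g_var].
have C0 := transfer_const_ge0 n theta_ge0 b1_ge0 b2_ge0.
have th0 : 0 <= theta m.+1 by exact: theta_ge0.
split.
  apply: (opnorm_of_Bcontracts theta_ge0) theta_cvg C0 _.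
  apply: (Lop_Bcontracts theta_mono theta_ge0 b1_ge0 b2_ge0 g_expb g_var).
rewrite Kqop_eq -exprMn.
apply: (opnorm_of_Bcontracts theta_ge0) theta_cvg (exprn_ge0 _ (mulr_ge0 C0 th0)) _.
apply: Bcontracts_iter (mulr_ge0 C0 th0) _.
apply: (LK_Bcontracts theta_mono theta_ge0 mu_open_pos b1_ge0 b2_ge0 g_expb g_var
  m_ge1 theta_le1).
Qed.
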